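(* For every integer $n\geq 1$, $$c_n(231,1243 : 231)=c_n(312,2134 : 312)=\begin{cases}\frac{4k^3+3k^2-k}{6}+1 & \text{if } n=2k,\\ \frac{4k^3+9k^2+5k}{6}+1 & \text{if } n=2k+1.\end{cases}$$
   Context: $S_n$ is the symmetric group on $[n]=\{1,\dots,n\}$, and a permutation $\pi\in S_n$ is written in one-line notation $\pi=\pi_1\pi_2\cdots\pi_n$ with $\pi_i=\pi(i)$. For $\tau\in S_k$, $k\le n$, $\pi$ contains $\tau$ if there are indices $i_1<\dots<i_k$ with $\pi_{i_s}>\pi_{i_t}$ iff $\tau_s>\tau_t$ for all $1\le s<t\le k$; otherwise $\pi$ avoids $\tau$. $\pi^2$ denotes the composition $\pi\circ\pi$. For patterns $\sigma_1,\sigma_2,\rho$, $c_n(\sigma_1,\sigma_2 : \rho)$ denotes the number of permutations $\pi\in S_n$ such that $\pi$ avoids both $\sigma_1$ and $\sigma_2$ and $\pi^2$ avoids $\rho$. *)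

From mathcomp Require Import all_boot all_order all_algebra all_fingroup.
Set Implicit Arguments. Unset Strict Implicit. Unset Printing Implicit Defensive.

Definition oneline (n : nat) (pi : {perm 'I_n}) : seq nat :=
  [seq (val (pi i)).+1 | i <- enum 'I_n].

(* A pattern tau in S_k is given by its one-line notation (a seq nat).
   pi contains tau iff some subsequence (chosen by a mask, i.e. indices
   i_1 < ... < i_k) of the one-line notation of pi has size k and satisfies
   pi_{i_s} > pi_{i_t} <-> tau_s > tau_t for all s < t. *)
Definition contains (n : nat) (pi : {perm 'I_n}) (tau : seq nat) : bool :=
  [exists m : n.-tuple bool,
     let s := mask m (oneline pi) in
     (size s == size tau) &&
     [forall a : 'I_(size tau), forall b : 'I_(size tau),
        (a < b) ==> ((nth 0 s a > nth 0 s b) == (nth 0 tau a > nth 0 tau b))]].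

Definition avoids (n : nat) (pi : {perm 'I_n}) (tau : seq nat) : bool :=
  ~~ contains pi tau.

Definition cn (n : nat) (sigma1 sigma2 rho : seq nat) : nat :=
  #|[set pi : {perm 'I_n} | [&& avoids pi sigma1, avoids pi sigma2
                              & avoids (pi * pi)%g rho]]|.

From mathcomp Require Import all_boot all_order all_algebra all_fingroup.
From mathcomp Require Import zify lra.
Set Implicit Arguments. Unset Strict Implicit. Unset Printing Implicit Defensive.

(* If pi avoids 231 and 1243 and pi^2 avoids 231, then after stripping fixed
   points at the end, avoiding 231 splits pi at the position t of its maximum
   into blocks [0,t) and [t,n), and avoiding 1243 makes the first block
   decreasing.  The second block starts with its maximum, so pi^2 sends the
   position r of its minimum to that maximum; splitting pi^2 there forces the
   block to read b-1, ..., j, 0, ..., j-1 with 1 <= j <= b/2.  Conversely all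
   such permutations qualify, so c_n = 1 + sum_(e <= n) sum_(b <= e) floor(b/2).
   Conjugation by the reversal (reverse-complement) commutes with squaring and
   exchanges 231 with 312 and 1243 with 2134, which gives the first equality. *)

(** * Functions on an initial segment of nat *)

Definition maps_below (p : nat -> nat) n := forall i, i < n -> p i < n.

Definition inj_below (p : nat -> nat) n :=
  forall i j, i < n -> j < n -> p i = p j -> i = j.

Definition avoid231 (p : nat -> nat) n :=
  forall i j k, i < j -> j < k -> k < n -> p k < p i -> p i < p j -> False.

Definition avoid312 (p : nat -> nat) n :=
  forall i j k, i < j -> j < k -> k < n -> p j < p k -> p k < p i -> False.

Definition avoid1243 (p : nat -> nat) n :=
  forall i j k l, i < j -> j < k -> k < l -> l < n ->
    p i < p j -> p j < p l -> p l < p k -> False.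

Definition avoid2134 (p : nat -> nat) n :=
  forall i j k l, i < j -> j < k -> k < l -> l < n ->
    p j < p i -> p i < p k -> p k < p l -> False.

Lemma eq_avoid231 p q n : (forall i, i < n -> p i = q i) -> avoid231 p n -> avoid231 q n.
Proof. by move=> eq_pq p231 i j k ij jk kn; rewrite -!eq_pq; [apply: p231 | lia..]. Qed.

Lemma eq_avoid1243 p q n : (forall i, i < n -> p i = q i) -> avoid1243 p n -> avoid1243 q n.
Proof. by move=> eq_pq p1243 i j k l ij jk kl ln; rewrite -!eq_pq; [apply: p1243 | lia..]. Qed.

Lemma inj_below_leq (f : nat -> nat) n N :
  (forall i, i < n -> f i < N) -> inj_below f n -> n <= N.
Proof.
move=> fN f_inj; pose g (i : 'I_n) : 'I_N := Ordinal (fN i (ltn_ord i)).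
have g_inj : injective g by move=> x y [/f_inj eq_xy]; apply/val_inj/eq_xy.
by have := leq_card g g_inj; rewrite !card_ord.
Qed.

Lemma inj_below_onto p n : maps_below p n -> inj_below p n ->
  forall v, v < n -> exists2 i, i < n & p i = v.
Proof.
move=> p_lt p_inj v vn; pose g (i : 'I_n) : 'I_n := Ordinal (p_lt i (ltn_ord i)).
have g_inj : injective g by move=> x y [/p_inj eq_xy]; apply/val_inj/eq_xy.
have /codomP [i /(congr1 val) /= piv] := injF_onto g_inj (Ordinal vn).
by exists i.
Qed.

Section MonotoneOnInterval.
Variables (p : nat -> nat) (s len lo : nat).
Hypothesis p_range : forall i, s <= i < s + len -> lo <= p i < lo + len.

Lemma decreasing_rev :
  (forall i i', s <= i -> i < i' -> i' < s + len -> p i' < p i) ->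
  forall d, d < len -> p (s + d) = lo + (len.-1 - d).
Proof.
move=> p_dec.
have upper d : d < len -> p (s + d) + d < lo + len.
  elim: d => [|d IH] dl; first by rewrite !addn0; have := p_range (i := s); lia.
  by have := IH (ltnW dl); have := p_dec (s + d) (s + d.+1); lia.
have lower d : d < len -> lo + d <= p (s + (len.-1 - d)).
  elim: d => [|d IH] dl; first by have := p_range (i := s + len.-1); rewrite subn0; lia.
  by have := IH (ltnW dl); have := p_dec (s + (len.-1 - d.+1)) (s + (len.-1 - d)); lia.
move=> d dl; have := upper d dl; have := lower (len.-1 - d).
by rewrite (_ : len.-1 - (len.-1 - d) = d); lia.
Qed.

Lemma increasing_shift :
  (forall i i', s <= i -> i < i' -> i' < s + len -> p i < p i') ->
  forall d, d < len -> p (s + d) = lo + d.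
Proof.
move=> p_inc.
have lower d : d < len -> lo + d <= p (s + d).
  elim: d => [|d IH] dl; first by rewrite !addn0; have := p_range (i := s); lia.
  by have := IH (ltnW dl); have := p_inc (s + d) (s + d.+1); lia.
have upper d : d < len -> p (s + (len.-1 - d)) + d < lo + len.
  elim: d => [|d IH] dl; first by have := p_range (i := s + len.-1); rewrite subn0; lia.
  by have := IH (ltnW dl); have := p_inc (s + (len.-1 - d.+1)) (s + (len.-1 - d)); lia.
move=> d dl; have := lower d dl; have := upper (len.-1 - d).
by rewrite (_ : len.-1 - (len.-1 - d) = d); lia.
Qed.

End MonotoneOnInterval.

(** * Permutations avoiding 231 and 1243 with square avoiding 231 *)

Lemma avoid231_split_at_max p n t :
  maps_below p n -> inj_below p n -> avoid231 p n -> t < n -> p t = n.-1 ->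
  (forall i, i < t -> p i < t) /\ (forall k, t <= k < n -> t <= p k).
Proof.
move=> p_lt p_inj p231 tn pt.
have before_after i k : i < t -> t <= k < n -> p i < p k.
  move=> it /andP [tk kn]; have := p_lt k kn; have := p_lt i (ltn_trans it tn) => pin pkn.
  case: (ltngtP (p i) (p k)) => // [pki|eq_pik]; last by have := p_inj i k; lia.
  have pit : p i < p t by have := p_inj i t; lia.
  by case: (ltngtP t k) => [tk'||eq_tk]; [have := p231 i t k | | subst k]; lia.
split=> [i it | k tkn].
- suff : n - t <= n.-1 - p i by lia.
  apply: (@inj_below_leq (fun k => p (t + k) - p i - 1)) => [k kn | k1 k2 k1n k2n].
    by have := p_lt (t + k); have := before_after i (t + k) it; lia.
  have := before_after i (t + k1) it; have := before_after i (t + k2) it.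
  by have := p_inj (t + k1) (t + k2); lia.
- apply: (@inj_below_leq p) => [i it | i j it jt]; first exact: before_after.
  by apply: p_inj; lia.
Qed.

Section BlockShape.
Variables (m r : nat) (p : nat -> nat).
Hypotheses (m_ge2 : 2 <= m) (p_lt : maps_below p m) (p_inj : inj_below p m).
Hypotheses (p231 : avoid231 p m) (sq231 : avoid231 (fun i => p (p i)) m).
Hypotheses (p0 : p 0 = m.-1) (rm : r < m) (pr : p r = 0).

Let p_onto := inj_below_onto p_lt p_inj.

Lemma zero_pos_gt0 : 0 < r.
Proof. by move: pr; case: r => // /eqP; rewrite p0; lia. Qed.

Lemma head_decreasing i i' : i < i' -> i' < r -> p i' < p i.
Proof.
move=> ii' i'r; have := zero_pos_gt0 => r_gt0.
case: (ltngtP (p i') (p i)) => // [pii'|]; last by have := @p_inj i' i; lia.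
have p_pos : 0 < p i by have := @p_inj i r; lia.
by have := @p231 i i' r; lia.
Qed.

Lemma sq_split :
  (forall i, i < r -> p (p i) < r) /\ (forall k, r <= k < m -> r <= p (p k)).
Proof.
apply: avoid231_split_at_max => //; last by rewrite pr.
- by move=> i im; apply/p_lt/p_lt.
- by move=> i j im jm /(p_inj (p_lt im) (p_lt jm)); apply: p_inj.
Qed.

(* Otherwise the position of the value r, x and m-1 would form a 231. *)
Lemma tail_below_zero_pos x : r <= x < m -> p x < r.
Proof.
move=> /andP [rx xm]; rewrite ltnNge; apply/negP => rpx.
have [sq_head sq_tail] := sq_split; have r_gt0 := zero_pos_gt0.
have pm1 : p m.-1 < r by have := sq_head 0 r_gt0; rewrite p0.
have x_ne_r : x != r by apply: contraTneq rpx => ->; rewrite pr -ltnNge.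
have px_ne_r : p x != r by apply/eqP => pxr; have := sq_tail x; rewrite pxr pr; lia.
have [y ym py] := p_onto rm.
have yr : y < r by rewrite ltnNge; apply/negP => ry; have := sq_tail y; rewrite py pr; lia.
have x_ne_m1 : x != m.-1 by apply: contraTneq rpx => ->; rewrite -ltnNge.
by have := p_lt xm; have := @p231 y x m.-1; lia.
Qed.

Lemma tail_below_head i x : i < r -> r <= x < m -> p x < p i.
Proof.
move=> ir xrm; have [sq_head sq_tail] := sq_split.
case: (ltngtP (p x) (p i)) => // [pix|]; last by have := @p_inj x i; lia.
have := head_decreasing pix (tail_below_zero_pos xrm).
by have := sq_head i ir; have := sq_tail x xrm; lia.
Qed.

Lemma head_rev i : i < r -> p i = m.-1 - i.
Proof.
have r_gt0 := zero_pos_gt0.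
have tail_len : m - r <= p r.-1.
  apply: (@inj_below_leq (fun k => p (r + k))) => [k km | k1 k2 k1m k2m].
    by apply: tail_below_head; lia.
  by move/p_inj => eq_k; have := eq_k _ _; lia.
have range i' : 0 <= i' < 0 + r -> m - r <= p i' < m - r + r.
  move=> /andP [_ i'r]; have := @p_lt i'.
  by case: (ltngtP i' r.-1) => [ir1 | | ->]; [have := head_decreasing ir1 | |]; lia.
move=> ir; have := decreasing_rev range (fun i i' _ => @head_decreasing i i') ir.
by rewrite add0n; lia.
Qed.

Lemma tail_short : m - r <= r.
Proof.
rewrite leqNgt; apply/negP => long_tail; have [_ sq_tail] := sq_split.
have [y ym py] := p_onto rm.
case: (ltnP y r) => [yr | ry]; first by have := head_rev yr; lia.
by have := sq_tail y; have := zero_pos_gt0; rewrite py pr; lia.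
Qed.

(* On the head p is the mirror z |-> m-1-z of the tail, so a descent of p on
   the tail gives a 231 of p^2 at the mirrored positions. *)
Lemma tail_increasing x y : r <= x -> x < y -> y < m -> p x < p y.
Proof.
move=> rx xy ym; have short := tail_short.
case: (ltngtP (p x) (p y)) => // [pyx|]; last by have := @p_inj x y; lia.
have xr : r < x by rewrite ltn_neqAle rx andbT; apply: contraTneq pyx => <-; rewrite pr.
have py_pos : 0 < p y by have := @p_inj y r; lia.
have mirror z : r <= z < m -> p (m.-1 - z) = z.
  by move=> zrm; rewrite head_rev; lia.
have := @sq231 (m.-1 - y) (m.-1 - x) (m.-1 - r).
by rewrite !mirror ?pr; lia.
Qed.

Lemma tail_shift d : d < m - r -> p (r + d) = d.
Proof.
have range x : r <= x < r + (m - r) -> 0 <= p x < 0 + (m - r).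
  move=> xrm; have r_gt0 := zero_pos_gt0; have := @tail_below_head r.-1 x.
  by rewrite [p r.-1]head_rev; lia.
have inc x y : r <= x -> x < y -> y < r + (m - r) -> p x < p y.
  by rewrite subnKC ?(ltnW rm) //; exact: tail_increasing.
by move=> dm; rewrite (increasing_shift range inc dm).
Qed.

Lemma block_shape_of_zero_pos : exists2 j, 0 < j <= m./2 &
  forall i, i < m -> p i = if i < m - j then m.-1 - i else i - (m - j).
Proof.
have r_gt0 := zero_pos_gt0; have short := tail_short.
exists (m - r); first by apply/andP; split; lia.
rewrite (_ : m - (m - r) = r); last lia.
move=> i im; case: ifP => [ir | /negbT]; first exact: head_rev.
by rewrite -leqNgt => ri; rewrite -{1}(subnKC ri) tail_shift //; lia.
Qed.

End BlockShape.

Lemma block_shape m p : 2 <= m -> maps_below p m -> inj_below p m ->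
  avoid231 p m -> avoid231 (fun i => p (p i)) m -> p 0 = m.-1 ->
  exists2 j, 0 < j <= m./2 &
    forall i, i < m -> p i = if i < m - j then m.-1 - i else i - (m - j).
Proof.
move=> m_ge2 p_lt p_inj p231 sq231 p0.
have [r rm pr] := inj_below_onto p_lt p_inj (ltn_trans (ltnSn 0) m_ge2).
exact: (block_shape_of_zero_pos m_ge2 p_lt p_inj p231 sq231 p0 rm pr).
Qed.

(* In one-line notation on 0..n-1, [tri_block a b j] is the direct sum of the
   decreasing permutation of length a, the block
   (b-1, b-2, ..., j, 0, 1, ..., j-1) of length b, and an identity. *)
Definition tri_block (a b j i : nat) : nat :=
  if i < a then a.-1 - i
  else if i < a + b - j then (a + a + b).-1 - i
  else if i < a + b then i + j - b
  else i.

Definition tri_block_param n (a b j : nat) : bool :=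
  [&& a == 0, b == 0 & j == 0] || [&& 0 < j <= b./2 & a + b <= n].

Lemma tri_block_id a b j i : a + b <= i -> tri_block a b j i = i.
Proof. by rewrite /tri_block => abi; do 3 (case: ifP => ?; first lia). Qed.

Lemma shift_suffix_avoid231 p n t :
  maps_below p n -> inj_below p n -> avoid231 p n -> avoid231 (fun i => p (p i)) n ->
  (forall k, t <= k < n -> t <= p k) ->
  let q i := p (t + i) - t in
  [/\ maps_below q (n - t), inj_below q (n - t), avoid231 q (n - t)
    & avoid231 (fun i => q (q i)) (n - t)].
Proof.
move=> p_lt p_inj p231 sq231 tail_ge q.
have q_ge i : i < n - t -> t <= p (t + i) by move=> it; apply: tail_ge; lia.
have qq_ge i : i < n - t -> t <= p (p (t + i)).
  by move=> it; apply: tail_ge; have := q_ge i it; have := p_lt (t + i); lia.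
have qqE i : i < n - t -> q (q i) = p (p (t + i)) - t.
  by move=> it; rewrite /q subnKC ?q_ge.
split=> [i it | i1 i2 i1t i2t | i j k ij jk kt | i j k ij jk kt].
- by have := p_lt (t + i); rewrite /q; lia.
- rewrite /q; have := q_ge i1 i1t; have := q_ge i2 i2t.
  by have := p_inj (t + i1) (t + i2); lia.
- rewrite /q; have := q_ge i; have := q_ge j; have := q_ge k.
  by have := p231 (t + i) (t + j) (t + k); lia.
- rewrite !qqE; try lia; have := qq_ge i; have := qq_ge j; have := qq_ge k.
  by have := sq231 (t + i) (t + j) (t + k); lia.
Qed.

Lemma tri_block_of_max_pos p n t :
  maps_below p n -> inj_below p n -> avoid231 p n -> avoid1243 p n ->
  avoid231 (fun i => p (p i)) n -> t.+1 < n -> p t = n.-1 ->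
  exists2 j, 0 < j <= (n - t)./2 & forall i, i < n -> p i = tri_block t (n - t) j i.
Proof.
move=> p_lt p_inj p231 p1243 sq231 tn pt.
have [head_lt tail_ge] := avoid231_split_at_max p_lt p_inj p231 (ltnW tn) pt.
have head_dec i i' : 0 <= i -> i < i' -> i' < 0 + t -> p i' < p i.
  move=> _ ii' i't; have := head_lt i'; have := @tail_ge n.-1; have := p_lt n.-1.
  case: (ltngtP (p i') (p i)) => // [pii'|]; last by have := p_inj i' i; lia.
  by have := p_inj n.-1 t; have := p1243 i i' t n.-1; lia.
have head_range i : 0 <= i < 0 + t -> 0 <= p i < 0 + t by move=> it; have := head_lt i; lia.
have head_rev := decreasing_rev head_range head_dec.
have [q_lt q_inj q231 sq231'] := shift_suffix_avoid231 p_lt p_inj p231 sq231 tail_ge.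
have q0 : p (t + 0) - t = (n - t).-1 by rewrite addn0 pt; lia.
have [j j_range qE] := block_shape (ltac:(lia) : 2 <= n - t) q_lt q_inj q231 sq231' q0.
exists j => // i ilt; rewrite /tri_block.
case: ifP => [it | /negbT]; first by rewrite -[i]add0n head_rev.
rewrite -leqNgt => ti; have := qE (i - t); have := tail_ge i.
rewrite subnKC //; repeat case: ifP => ?; lia.
Qed.

Lemma restrict_last_fixed p n :
  maps_below p n.+1 -> inj_below p n.+1 -> p n = n ->
  maps_below p n /\ inj_below p n.
Proof.
move=> p_lt p_inj pn; split=> [i ilt | i j ilt jlt]; last by apply: p_inj; lia.
by have := p_lt i; have := p_inj i n; lia.
Qed.

Theorem tri_block_of_avoiding p n :
  maps_below p n -> inj_below p n -> avoid231 p n -> avoid1243 p n ->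
  avoid231 (fun i => p (p i)) n ->
  exists a b j, tri_block_param n a b j /\ forall i, i < n -> p i = tri_block a b j i.
Proof.
elim: n => [|n IH] p_lt p_inj p231 p1243 sq231; first by exists 0, 0, 0.
case: (eqVneq (p n) n) => [pn | pn_ne].
- have [p_lt' p_inj'] := restrict_last_fixed p_lt p_inj pn.
  have [a [b [j [param pE]]]] := IH p_lt' p_inj'
    (fun i j k ij jk kn => p231 i j k ij jk (ltnW kn))
    (fun i j k l ij jk kl ln => p1243 i j k l ij jk kl (ltnW ln))
    (fun i j k ij jk kn => sq231 i j k ij jk (ltnW kn)).
  exists a, b, j; split; first by move: param; rewrite /tri_block_param; lia.
  move=> i; rewrite ltnS leq_eqVlt => /orP [/eqP -> | /pE //].
  by rewrite pn tri_block_id //; move: param; rewrite /tri_block_param; lia.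
- have [t tn pt] := inj_below_onto p_lt p_inj (ltnSn n).
  have tn' : t < n.
    by rewrite ltn_neqAle -ltnS tn andbT; apply: contraNneq pn_ne => e; rewrite -e pt e.
  have [j j_range pE] := tri_block_of_max_pos p_lt p_inj p231 p1243 sq231 (tn' : t.+1 < n.+1) pt.
  by exists t, (n.+1 - t), j; split; rewrite // /tri_block_param; apply/orP; right; lia.
Qed.

Variant tri_block_spec (a b j i : nat) : nat -> Type :=
  | BlkRev of i < a : tri_block_spec a b j i (a.-1 - i)
  | BlkDec of a <= i & i < a + b - j : tri_block_spec a b j i ((a + a + b).-1 - i)
  | BlkInc of a + b - j <= i & i < a + b : tri_block_spec a b j i (i + j - b)
  | BlkId of a + b <= i : tri_block_spec a b j i i.

Lemma tri_blockP a b j i : tri_block_spec a b j i (tri_block a b j i).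
Proof.
rewrite /tri_block; case: ifP => [|/negbT]; rewrite -?leqNgt => h1; first exact: BlkRev.
case: ifP => [|/negbT]; rewrite -?leqNgt => h2; first exact: BlkDec.
by case: ifP => [|/negbT]; rewrite -?leqNgt => h3; [apply: BlkInc | apply: BlkId].
Qed.

Ltac case_tri_block := repeat match goal with
  | |- context [tri_block ?a ?b ?j ?x] =>
      lazymatch x with context [tri_block] => fail | _ =>
      case: (tri_blockP a b j x) => [?|? ?|? ?|?]; try lia end
  end.

Definition tri_block_sq (a b j i : nat) : nat :=
  if i < a then i
  else if i < a + j then (a + a + j).-1 - i
  else if i < a + b - j then i
  else if i < a + b then (a + a + b + b - j).-1 - i
  else i.

Variant tri_block_sq_spec (a b j i : nat) : nat -> Type :=
  | SqFix1 of i < a : tri_block_sq_spec a b j i i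
  | SqRev1 of a <= i & i < a + j : tri_block_sq_spec a b j i ((a + a + j).-1 - i)
  | SqFix2 of a + j <= i & i < a + b - j : tri_block_sq_spec a b j i i
  | SqRev2 of a + b - j <= i & i < a + b : tri_block_sq_spec a b j i ((a + a + b + b - j).-1 - i)
  | SqFix3 of a + b <= i : tri_block_sq_spec a b j i i.

Lemma tri_block_sqP a b j i : tri_block_sq_spec a b j i (tri_block_sq a b j i).
Proof.
rewrite /tri_block_sq; case: ifP => [|/negbT]; rewrite -?leqNgt => h1; first exact: SqFix1.
case: ifP => [|/negbT]; rewrite -?leqNgt => h2; first exact: SqRev1.
case: ifP => [|/negbT]; rewrite -?leqNgt => h3; first exact: SqFix2.
by case: ifP => [|/negbT]; rewrite -?leqNgt => h4; [apply: SqRev2 | apply: SqFix3].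
Qed.

Ltac case_tri_block_sq := repeat match goal with
  | |- context [tri_block_sq ?a ?b ?j ?x] =>
      case: (tri_block_sqP a b j x) => [?|? ?|? ?|? ?|?]; try lia
  end.

Section TriBlockAvoids.
Variables (n a b j : nat).
Hypotheses (j_range : 0 < j <= b./2) (ab_n : a + b <= n).

Lemma tri_block_lt : maps_below (tri_block a b j) n.
Proof. by move=> i im; case_tri_block. Qed.

Lemma tri_block_inj : inj_below (tri_block a b j) n.
Proof. by move=> i k im km; case_tri_block. Qed.

Lemma tri_block_sqE i : tri_block a b j (tri_block a b j i) = tri_block_sq a b j i.
Proof. by case_tri_block; case_tri_block_sq. Qed.

Lemma tri_block_avoid231 : avoid231 (tri_block a b j) n.
Proof. by move=> i k l ik kl ln; case_tri_block. Qed.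

Lemma tri_block_avoid1243 : avoid1243 (tri_block a b j) n.
Proof. by move=> i k l o ik kl lo on; case_tri_block. Qed.

Lemma tri_block_sq_avoid231 : avoid231 (fun i => tri_block a b j (tri_block a b j i)) n.
Proof. by move=> i k l ik kl ln; rewrite !tri_block_sqE; case_tri_block_sq. Qed.

End TriBlockAvoids.

Lemma tri_block_param_avoids n a b j : tri_block_param n a b j ->
  [/\ maps_below (tri_block a b j) n, inj_below (tri_block a b j) n,
      avoid231 (tri_block a b j) n, avoid1243 (tri_block a b j) n
    & avoid231 (fun i => tri_block a b j (tri_block a b j i)) n].
Proof.
case/orP => [/and3P [/eqP -> /eqP -> /eqP ->] | /andP [j_range abn]].
  by split=> [i|i k|i k l|i k l o|i k l]; rewrite ?tri_block_id; lia.
split; [exact: tri_block_lt | exact: tri_block_inj | exact: tri_block_avoid231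
       | exact: tri_block_avoid1243 | exact: tri_block_sq_avoid231].
Qed.

(** * Counting *)

Lemma tri_block_param_inj n a b j a' b' j' :
  tri_block_param n a b j -> tri_block_param n a' b' j' ->
  (forall i, i < n -> tri_block a b j i = tri_block a' b' j' i) -> (a, b, j) = (a', b', j').
Proof.
rewrite /tri_block_param => /orP [/and3P [/eqP -> /eqP -> /eqP ->] | /andP [jb abn]];
  move=> /orP [/and3P [/eqP -> /eqP -> /eqP ->] | /andP [jb' abn']] // eq_ab.
- by have := eq_ab a' ltac:(lia); case_tri_block.
- by have := eq_ab a ltac:(lia); case_tri_block.
have eq_end : a + b = a' + b'.
  case: (ltngtP (a + b) (a' + b')) => // ab_lt.
  + by have := eq_ab (a' + b').-1 ltac:(lia); case_tri_block.
  + by have := eq_ab (a + b).-1 ltac:(lia); case_tri_block.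
have eq_a : a = a'.
  case: (ltngtP a a') => // a_lt.
  + by have := eq_ab a ltac:(lia); case_tri_block.
  + by have := eq_ab a' ltac:(lia); case_tri_block.
have eq_j : j = j' by have := eq_ab (a + b).-1 ltac:(lia); case_tri_block.
by congr (_, _, _); lia.
Qed.

Fixpoint params_ending_at (e c : nat) : seq (nat * nat * nat) :=
  if c is c'.+1 then params_ending_at e c' ++ [seq (e - c, c, j) | j <- iota 1 c./2]
  else [::].

Fixpoint tri_block_params (n : nat) : seq (nat * nat * nat) :=
  if n is n'.+1 then tri_block_params n' ++ params_ending_at n n else [:: (0, 0, 0)].

Lemma tri_block_paramsS n :
  tri_block_params n.+1 = tri_block_params n ++ params_ending_at n.+1 n.+1.
Proof. by []. Qed.

Lemma mem_params_ending_at e c a b j : ((a, b, j) \in params_ending_at e c) =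
  [&& 0 < j <= b./2, b <= c & a == e - b].
Proof.
elim: c => [|c IH] /=; first by rewrite in_nil; apply/esym/negbTE; lia.
rewrite mem_cat IH; apply/idP/idP.
- case/orP => [/and3P [? ? ?] | /mapP [j' ]]; first by apply/and3P; split; lia.
  by rewrite mem_iota => j'_range [-> -> ->]; apply/and3P; split; lia.
- move=> /and3P [j_range bc /eqP ->]; apply/orP.
  case: (ltnP b c.+1) => bc'; [left | right]; first by apply/and3P; split; lia.
  have -> : b = c.+1 by lia.
  by apply/mapP; exists j; rewrite // mem_iota; lia.
Qed.

Lemma mem_tri_block_params n a b j :
  ((a, b, j) \in tri_block_params n) = tri_block_param n a b j.
Proof.
rewrite /tri_block_param; elim: n => [|n IH].
  by rewrite inE !xpair_eqE; apply/idP/idP; lia.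
by rewrite tri_block_paramsS mem_cat IH mem_params_ending_at; apply/idP/idP; lia.
Qed.

Lemma uniq_params_ending_at e c : uniq (params_ending_at e c).
Proof.
elim: c => [|c IH] //=; rewrite cat_uniq IH /=; apply/andP; split.
- by apply/hasPn => _ /mapP [j _ ->]; rewrite mem_params_ending_at; lia.
- by rewrite map_inj_uniq ?iota_uniq // => j j' [].
Qed.

Lemma uniq_tri_block_params n : uniq (tri_block_params n).
Proof.
elim: n => [|n IH] //; rewrite tri_block_paramsS cat_uniq IH uniq_params_ending_at andbT.
apply/hasPn => -[[a b] j]; rewrite mem_params_ending_at mem_tri_block_params.
by rewrite /tri_block_param; lia.
Qed.

Fixpoint sum_half (c : nat) : nat := if c is c'.+1 then sum_half c' + c./2 else 0.

Fixpoint nb_tri_blocks (n : nat) : nat :=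
  if n is n'.+1 then nb_tri_blocks n' + sum_half n else 1.

Lemma size_tri_block_params n : size (tri_block_params n) = nb_tri_blocks n.
Proof.
have size_end e c : size (params_ending_at e c) = sum_half c.
  by elim: c => [|c IH] //=; rewrite size_cat IH size_map size_iota.
by elim: n => [|n IH] //; rewrite tri_block_paramsS size_cat IH size_end.
Qed.

Lemma sum_half_closed k : sum_half (2 * k) = k * k /\ sum_half (2 * k).+1 = k * k.+1.
Proof.
elim: k => [|k [IH1 IH2]] //; rewrite (_ : 2 * k.+1 = (2 * k).+2) /=; last lia.
by rewrite IH1; split; lia.
Qed.

Lemma nb_tri_blocks_closed k :
  6 * nb_tri_blocks (2 * k) + k = 4 * k ^ 3 + 3 * k ^ 2 + 6 /\
  6 * nb_tri_blocks (2 * k).+1 = 4 * k ^ 3 + 9 * k ^ 2 + 5 * k + 6.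
Proof.
elim: k => [|k [IH1 IH2]] //; have [h1 h2] := sum_half_closed k.
have [h3 h4] := sum_half_closed k.+1.
rewrite (_ : 2 * k.+1 = (2 * k).+2) in h3 h4 *; last lia.
by rewrite /= in IH2 *; split; nia.
Qed.

(** * Pattern containment in permutations *)

Lemma subseq_iota0 s n : subseq s (iota 0 n) = sorted ltn s && all (gtn n) s.
Proof.
apply/idP/andP => [sub_s | [s_sorted s_lt]].
  split; first exact: (subseq_sorted ltn_trans sub_s (iota_ltn_sorted 0 n)).
  by apply/allP => x /(mem_subseq sub_s); rewrite mem_iota.
have <- : [seq x <- iota 0 n | x \in s] = s.
  apply: (irr_sorted_eq ltn_trans ltnn) => //.
    exact: (sorted_filter ltn_trans _ (iota_ltn_sorted 0 n)).
  by move=> x; rewrite mem_filter mem_iota andb_idr // => /(allP s_lt).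
exact: filter_subseq.
Qed.

Definition same_pattern (s tau : seq nat) : bool :=
  (size s == size tau) &&
  [forall a : 'I_(size tau), forall b : 'I_(size tau),
     (a < b) ==> ((nth 0 s a > nth 0 s b) == (nth 0 tau a > nth 0 tau b))].

Lemma same_pattern3 x y z t0 t1 t2 : same_pattern [:: x; y; z] [:: t0; t1; t2] =
  [&& (y < x) == (t1 < t0), (z < x) == (t2 < t0) & (z < y) == (t2 < t1)].
Proof.
apply/idP/idP => [/andP [_ /forallP pat] | /and3P [p01 p02 p12]].
- have pat_at (a b : 'I_3) := forallP (pat a) b.
  have := pat_at ord0 (inord 1); have := pat_at ord0 (inord 2).
  have := pat_at (inord 1) (inord 2).
  by rewrite /= !inordK //= => -> -> ->.
- by apply/andP; split=> //; apply/forallP => -[[|[|[|a]]] ?] //;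
    apply/forallP => -[[|[|[|b]]] ?].
Qed.

Lemma same_pattern4 x y z w t0 t1 t2 t3 :
  same_pattern [:: x; y; z; w] [:: t0; t1; t2; t3] =
  [&& (y < x) == (t1 < t0), (z < x) == (t2 < t0), (w < x) == (t3 < t0),
      (z < y) == (t2 < t1), (w < y) == (t3 < t1) & (w < z) == (t3 < t2)].
Proof.
apply/idP/idP => [/andP [_ /forallP pat] | /and5P [p01 p02 p03 p12 /andP [p13 p23]]].
- have pat_at (a b : 'I_4) := forallP (pat a) b.
  have := pat_at ord0 (inord 1); have := pat_at ord0 (inord 2).
  have := pat_at ord0 (inord 3); have := pat_at (inord 1) (inord 2).
  have := pat_at (inord 1) (inord 3); have := pat_at (inord 2) (inord 3).
  by rewrite /= !inordK //= => -> -> -> -> -> ->.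
- by apply/andP; split=> //; apply/forallP => -[[|[|[|[|a]]]] ?] //;
    apply/forallP => -[[|[|[|[|b]]]] ?].
Qed.

Section PermAsNatFun.
Variable n : nat.
Implicit Types (pi sigma : {perm 'I_n}).

Definition permn pi (k : nat) : nat := if insub k is Some x then val (pi x) else 0.

Lemma permnE pi (x : 'I_n) : permn pi x = val (pi x).
Proof. by rewrite /permn valK. Qed.

Lemma permn_ord pi k (kn : k < n) : permn pi k = val (pi (Ordinal kn)).
Proof. by rewrite -permnE. Qed.

Lemma permn_lt pi : maps_below (permn pi) n.
Proof. by move=> k kn; rewrite (permn_ord pi kn); apply: ltn_ord. Qed.

Lemma permn_inj pi : inj_below (permn pi) n.
Proof.
move=> i j i_lt j_lt; rewrite (permn_ord pi i_lt) (permn_ord pi j_lt).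
by move=> /val_inj /perm_inj [].
Qed.

Lemma permnM pi sigma k : k < n -> permn (pi * sigma)%g k = permn sigma (permn pi k).
Proof. by move=> kn; rewrite !(permn_ord _ kn) permnE permM. Qed.

Lemma oneline_permn pi : oneline pi = [seq (permn pi k).+1 | k <- iota 0 n].
Proof.
by rewrite /oneline -val_enum_ord -map_comp; apply: eq_map => x /=; rewrite permnE.
Qed.

Lemma containsP pi tau :
  reflect (exists2 s, subseq s (iota 0 n) & same_pattern [seq (permn pi k).+1 | k <- s] tau)
          (contains pi tau).
Proof.
apply: (iffP existsP) => [[m] | [s sub_s pat]].
  rewrite /= oneline_permn -map_mask => pat.
  by exists (mask m (iota 0 n)); first exact: mask_subseq.
move: pat; have /subseqP [m size_m ->] := sub_s => pat.
have size_m' : size m == n by rewrite size_m size_iota.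
by exists (Tuple size_m'); rewrite /= oneline_permn -map_mask.
Qed.

Lemma contains3P pi t0 t1 t2 : contains pi [:: t0; t1; t2] <->
  exists i j k, [/\ i < j, j < k, k < n &
    [&& (permn pi j < permn pi i) == (t1 < t0), (permn pi k < permn pi i) == (t2 < t0)
      & (permn pi k < permn pi j) == (t2 < t1)]].
Proof.
split=> [/containsP [[|i [|j [|k [|l s]]]] //] | [i [j [k [ij jk kn pat]]]]].
  rewrite subseq_iota0 /= same_pattern3 !ltnS => ijk pat.
  by exists i, j, k; split=> //; lia.
by apply/containsP; exists [:: i; j; k]; rewrite ?subseq_iota0 /= ?same_pattern3 ?ltnS //; lia.
Qed.

Lemma contains4P pi t0 t1 t2 t3 : contains pi [:: t0; t1; t2; t3] <->
  exists i j k l, [/\ i < j, j < k, k < l, l < n &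
    [&& (permn pi j < permn pi i) == (t1 < t0), (permn pi k < permn pi i) == (t2 < t0),
        (permn pi l < permn pi i) == (t3 < t0), (permn pi k < permn pi j) == (t2 < t1),
        (permn pi l < permn pi j) == (t3 < t1) & (permn pi l < permn pi k) == (t3 < t2)]].
Proof.
split=> [/containsP [[|i [|j [|k [|l [|o s]]]]] //] | [i [j [k [l [ij jk kl ln pat]]]]]].
  rewrite subseq_iota0 /= same_pattern4 !ltnS => ijkl pat.
  by exists i, j, k, l; split=> //; lia.
apply/containsP; exists [:: i; j; k; l]; rewrite ?subseq_iota0 /= ?same_pattern4 ?ltnS //.
lia.
Qed.

Lemma avoids231P pi : avoids pi [:: 2; 3; 1] <-> avoid231 (permn pi) n.
Proof.
split=> [/negP no_pat i j k ij jk kn ki ij' | p231].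
  by apply: no_pat; apply/contains3P; exists i, j, k; split=> //; lia.
apply/negP => /contains3P [i [j [k [ij jk kn pat]]]].
by have := @permn_inj pi i j; have := p231 i j k; lia.
Qed.

Lemma avoids312P pi : avoids pi [:: 3; 1; 2] <-> avoid312 (permn pi) n.
Proof.
split=> [/negP no_pat i j k ij jk kn jk' ki | p312].
  by apply: no_pat; apply/contains3P; exists i, j, k; split=> //; lia.
apply/negP => /contains3P [i [j [k [ij jk kn pat]]]].
by have := @permn_inj pi j k; have := p312 i j k; lia.
Qed.

Lemma avoids1243P pi : avoids pi [:: 1; 2; 4; 3] <-> avoid1243 (permn pi) n.
Proof.
split=> [/negP no_pat i j k l ij jk kl ln ij' jl lk | p1243].
  by apply: no_pat; apply/contains4P; exists i, j, k, l; split=> //; lia.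
apply/negP => /contains4P [i [j [k [l [ij jk kl ln pat]]]]].
by have := @permn_inj pi i j; have := @permn_inj pi j l; have := p1243 i j k l; lia.
Qed.

Lemma avoids2134P pi : avoids pi [:: 2; 1; 3; 4] <-> avoid2134 (permn pi) n.
Proof.
split=> [/negP no_pat i j k l ij jk kl ln ji ik kl' | p2134].
  by apply: no_pat; apply/contains4P; exists i, j, k, l; split=> //; lia.
apply/negP => /contains4P [i [j [k [l [ij jk kl ln pat]]]]].
by have := @permn_inj pi i k; have := @permn_inj pi k l; have := p2134 i j k l; lia.
Qed.


Definition sq_avoids (s1 s2 rho : seq nat) pi : bool :=
  [&& avoids pi s1, avoids pi s2 & avoids (pi * pi)%g rho].

Lemma sq_avoids231P pi :
  sq_avoids [:: 2; 3; 1] [:: 1; 2; 4; 3] [:: 2; 3; 1] pi <->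
  [/\ avoid231 (permn pi) n, avoid1243 (permn pi) n & avoid231 (fun i => permn pi (permn pi i)) n].
Proof.
have sqE i : i < n -> permn (pi * pi) i = permn pi (permn pi i) by apply: permnM.
split=> [/and3P [/avoids231P p231 /avoids1243P p1243 /avoids231P sq231] | [p231 p1243 sq231]].
  by split=> //; apply: eq_avoid231 sq231.
apply/and3P; split; [exact/avoids231P | exact/avoids1243P | apply/avoids231P].
by apply: eq_avoid231 sq231 => i /sqE.
Qed.

End PermAsNatFun.

Section ReverseComplementFun.
Variables (n : nat) (p q : nat -> nat).
Hypotheses (p_lt : maps_below p n) (qE : forall k, k < n -> q k = n.-1 - p (n.-1 - k)).

Let p_le i : i < n -> p i <= n.-1.
Proof. by move=> /p_lt; lia. Qed.

Lemma avoid312_revcompl : avoid312 q n <-> avoid231 p n.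
Proof.
split=> pat_free i j k ij jk kn.
- have := pat_free (n.-1 - k) (n.-1 - j) (n.-1 - i).
  rewrite !qE ?subKn; try lia.
  have := p_le (i := i) ltac:(lia); have := p_le (i := j) ltac:(lia).
  by have := p_le kn; lia.
- rewrite !qE; try lia.
  have := pat_free (n.-1 - k) (n.-1 - j) (n.-1 - i).
  have := p_le (i := n.-1 - i) ltac:(lia); have := p_le (i := n.-1 - j) ltac:(lia).
  by have := p_le (i := n.-1 - k) ltac:(lia); lia.
Qed.

Lemma avoid2134_revcompl : avoid2134 q n <-> avoid1243 p n.
Proof.
split=> pat_free i j k l ij jk kl ln.
- have := pat_free (n.-1 - l) (n.-1 - k) (n.-1 - j) (n.-1 - i).
  rewrite !qE ?subKn; try lia.
  have := p_le (i := i) ltac:(lia); have := p_le (i := j) ltac:(lia).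
  by have := p_le (i := k) ltac:(lia); have := p_le ln; lia.
- rewrite !qE; try lia.
  have := pat_free (n.-1 - l) (n.-1 - k) (n.-1 - j) (n.-1 - i).
  have := p_le (i := n.-1 - i) ltac:(lia); have := p_le (i := n.-1 - j) ltac:(lia).
  have := p_le (i := n.-1 - k) ltac:(lia).
  by have := p_le (i := n.-1 - l) ltac:(lia); lia.
Qed.

End ReverseComplementFun.

Section ReverseComplementPerm.
Variable n : nat.
Implicit Types pi : {perm 'I_n}.

Definition rev_perm : {perm 'I_n} := perm (@rev_ord_inj n).

Definition revcompl pi : {perm 'I_n} := (rev_perm * pi * rev_perm)%g.

Lemma revcomplK : involutive revcompl.
Proof. by move=> pi; apply/permP => x; rewrite !permM !permE !rev_ordK. Qed.

Lemma revcomplM pi sigma : revcompl (pi * sigma) = (revcompl pi * revcompl sigma)%g.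
Proof. by apply/permP => x; rewrite !permM !permE !rev_ordK. Qed.

Lemma permn_revcompl pi k : k < n -> permn (revcompl pi) k = n.-1 - permn pi (n.-1 - k).
Proof.
move=> kn; have kn' : n.-1 - k < n by lia.
rewrite (permn_ord _ kn) (permn_ord _ kn') !permM !permE /=.
by rewrite (_ : rev_ord (Ordinal kn) = Ordinal kn'); [lia | apply: val_inj => /=; lia].
Qed.

Lemma sq_avoids_revcompl pi :
  sq_avoids [:: 3; 1; 2] [:: 2; 1; 3; 4] [:: 3; 1; 2] (revcompl pi) =
  sq_avoids [:: 2; 3; 1] [:: 1; 2; 4; 3] [:: 2; 3; 1] pi.
Proof.
rewrite /sq_avoids -revcomplM.
have rc sigma := @permn_revcompl sigma; have lt sigma := @permn_lt n sigma.
apply/and3P/and3P => -[av1 av2 av3]; split.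
- exact/avoids231P/(avoid312_revcompl (lt _) (rc _))/avoids312P.
- exact/avoids1243P/(avoid2134_revcompl (lt _) (rc _))/avoids2134P.
- exact/avoids231P/(avoid312_revcompl (lt _) (rc _))/avoids312P.
- exact/avoids312P/(avoid312_revcompl (lt _) (rc _))/avoids231P.
- exact/avoids2134P/(avoid2134_revcompl (lt _) (rc _))/avoids1243P.
- exact/avoids312P/(avoid312_revcompl (lt _) (rc _))/avoids231P.
Qed.

End ReverseComplementPerm.

Section TriBlockPerm.
Variable n : nat.

Definition tri_block_ord (x : nat * nat * nat) (i : 'I_n) : 'I_n :=
  insubd i (tri_block x.1.1 x.1.2 x.2 i).

Definition tri_block_fun x : 'I_n -> 'I_n :=
  if injectiveb (tri_block_ord x) then tri_block_ord x else id.

Lemma tri_block_fun_inj x : injective (tri_block_fun x).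
Proof. by rewrite /tri_block_fun; case: injectiveP => // _; apply: inj_id. Qed.

Definition tri_block_perm x : {perm 'I_n} := perm (@tri_block_fun_inj x).

Lemma permn_tri_block_perm a b j k : tri_block_param n a b j -> k < n ->
  permn (tri_block_perm (a, b, j)) k = tri_block a b j k.
Proof.
move=> /tri_block_param_avoids [tb_lt tb_inj _ _ _] kn.
have inj : injective (tri_block_ord (a, b, j)).
  move=> u v /(congr1 val); rewrite !val_insubd !tb_lt //.
  by move/tb_inj => eq_uv; apply/val_inj/eq_uv.
rewrite (permn_ord _ kn) permE /tri_block_fun.
by have /injectiveP -> := inj; rewrite val_insubd /= tb_lt.
Qed.

End TriBlockPerm.

Lemma sq_avoids231_tri_blocks n :
  [set pi : {perm 'I_n} | sq_avoids [:: 2; 3; 1] [:: 1; 2; 4; 3] [:: 2; 3; 1] pi] =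
  [set pi in map (tri_block_perm n) (tri_block_params n)].
Proof.
apply/setP => pi; rewrite !inE; apply/idP/mapP => [/sq_avoids231P [p231 p1243 sq231] | ].
  have [a [b [j [param piE]]]] :=
    tri_block_of_avoiding (@permn_lt n pi) (@permn_inj n pi) p231 p1243 sq231.
  exists (a, b, j); first by rewrite mem_tri_block_params.
  by apply/permP => x; apply: val_inj; rewrite -!permnE permn_tri_block_perm // piE.
move=> [[[a b] j] /[!mem_tri_block_params] param ->].
have [tb_lt _ p231 p1243 sq231] := tri_block_param_avoids param.
have piE i : i < n -> tri_block a b j i = permn (tri_block_perm n (a, b, j)) i.
  by move=> i_lt; rewrite permn_tri_block_perm.
apply/sq_avoids231P; split; [exact: eq_avoid231 piE p231 | exact: eq_avoid1243 piE p1243 |].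
by apply: eq_avoid231 sq231 => i i_lt; rewrite -!piE ?tb_lt.
Qed.

Lemma cn231_tri_blocks n :
  cn n [:: 2; 3; 1] [:: 1; 2; 4; 3] [:: 2; 3; 1] = nb_tri_blocks n.
Proof.
rewrite /cn -/(sq_avoids _ _ _) sq_avoids231_tri_blocks cardsE.
rewrite (card_uniqP _) ?size_map ?size_tri_block_params //.
rewrite map_inj_in_uniq ?uniq_tri_block_params // => -[[a b] j] [[a' b'] j'].
rewrite !mem_tri_block_params => param param' eq_perm.
apply: (tri_block_param_inj param param') => i i_lt.
by rewrite -(permn_tri_block_perm param i_lt) -(permn_tri_block_perm param' i_lt) eq_perm.
Qed.

Lemma cn231_cn312 n :
  cn n [:: 2; 3; 1] [:: 1; 2; 4; 3] [:: 2; 3; 1] =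
  cn n [:: 3; 1; 2] [:: 2; 1; 3; 4] [:: 3; 1; 2].
Proof.
rewrite /cn -!/(sq_avoids _ _ _) -(card_imset _ (can_inj (@revcomplK n))).
apply: eq_card => pi; rewrite inE; apply/imsetP/idP => [[sigma] | av].
  by rewrite inE -sq_avoids_revcompl => av ->.
by exists (revcompl pi); rewrite ?inE -?sq_avoids_revcompl revcomplK.
Qed.

Import GRing.Theory.
Local Open Scope ring_scope.

Theorem theorem4p3 (n : nat) : (1 <= n)%N ->
  cn n [:: 2%N; 3%N; 1%N] [:: 1%N; 2%N; 4%N; 3%N] [:: 2%N; 3%N; 1%N]
    = cn n [:: 3%N; 1%N; 2%N] [:: 2%N; 1%N; 3%N; 4%N] [:: 3%N; 1%N; 2%N] /\
  (forall k : nat, n = (2 * k)%N ->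
     (cn n [:: 2%N; 3%N; 1%N] [:: 1%N; 2%N; 4%N; 3%N] [:: 2%N; 3%N; 1%N])%:R
       = (4 * (k%:R : rat) ^+ 3 + 3 * k%:R ^+ 2 - k%:R) / 6 + 1) /\
  (forall k : nat, n = (2 * k + 1)%N ->
     (cn n [:: 2%N; 3%N; 1%N] [:: 1%N; 2%N; 4%N; 3%N] [:: 2%N; 3%N; 1%N])%:R
       = (4 * (k%:R : rat) ^+ 3 + 9 * k%:R ^+ 2 + 5 * k%:R) / 6 + 1).
Proof.
move=> _; split; first exact: cn231_cn312.
rewrite cn231_tri_blocks; split=> k ->; have [even odd] := nb_tri_blocks_closed k.
- by have := congr1 (fun m => m%:R : rat) even; lra.
- by have := congr1 (fun m => m%:R : rat) odd; rewrite addn1; lra.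
Qed.
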